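(* Let $G$ be a finite additive group (not necessarily abelian) and let $\mathcal X$ be a Hadamard $(G,K,\lambda)$-PDF. Then $\{{}^2X \mid X\in\mathcal X\}$ is a $(G,2K,4\lambda)$ strong difference family.
   Context: Multisets: the multiset sum $X\uplus Y$ adds multiplicities; ${}^\mu X$ denotes the multiset sum of $\mu$ copies of $X$ (so ${}^2X$ is $X$ with every element taken twice). For a multiset $X=\{x_1,\dots,x_k\}$ on $G$, $\Delta X$ is the multiset of all $x_i-x_j$ over ordered pairs $(i,j)$ of distinct indices; for a collection $\mathcal X$, $\Delta\mathcal X=\biguplus_{X\in\mathcal X}\Delta X$. A $(G,K,\lambda)$-PDF is a collection of subsets of $G$ partitioning $G$, with multiset of block sizes $K$, such that $\Delta\mathcal X={}^\lambda(G\setminus\{0\})$; it is Hadamard if $|G|=2\lambda$. A $(G,K,\mu)$ strong difference family (SDF) is a collection $\mathcal Y$ of multisubsets of $G$ with multiset of sizes $K$ such that $\Delta\mathcal Y={}^\mu G$ (every element of $G$, including $0$, occurs exactly $\mu$ times). For a multiset $K$ of integers, $2K$ is the multiset $\{2k : k\in K\}$. *)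

(* A finite group G is the carrier of a finGroupType gT;
   the paper's additive notation x - y (= x + (-y)) is rendered x * y^-1,
   and 0 is 1. Multisets on G are sequences (seq gT), compared up to order
   via counts / perm_eq. *)
From HB Require Import structures.
From mathcomp Require Import all_boot all_fingroup.
Set Implicit Arguments. Unset Strict Implicit. Unset Printing Implicit Defensive.

Local Open Scope group_scope.

Section Defs.
Variable gT : finGroupType.

Definition DeltaSeq (s : seq gT) : seq gT :=
  [seq nth 1 s ij.1 * (nth 1 s ij.2)^-1
     | ij <- [seq (i, j) | i <- iota 0 (size s), j <- iota 0 (size s)]
     & ij.1 != ij.2].

Definition DeltaFam (F : seq (seq gT)) : seq gT := flatten (map DeltaSeq F).

Definition twice (s : seq gT) : seq gT := s ++ s.

Definition dbl (K : seq nat) : seq nat := map (muln 2) K.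

Definition is_PDF (F : seq {set gT}) (K : seq nat) (lambda : nat) : Prop :=
  (forall g : gT, count (fun X : {set gT} => g \in X) F = 1%N) /\
  perm_eq [seq #|X| | X : {set gT} <- F] K /\
  (forall g : gT,
     count_mem g (DeltaFam [seq enum X | X : {set gT} <- F]) = if g == 1 then 0%N else lambda).

Definition is_Hadamard_PDF (F : seq {set gT}) (K : seq nat) (lambda : nat) : Prop :=
  is_PDF F K lambda /\ #|gT| = (2 * lambda)%N.

Definition is_SDF (Y : seq (seq gT)) (K : seq nat) (mu : nat) : Prop :=
  perm_eq [seq size X | X <- Y] K /\
  (forall g : gT, count_mem g (DeltaFam Y) = mu).

End Defs.

(** Writing [D(s)] for the multiset of all [x - y] with [x, y] ranging over
    [s], including the [|s|] diagonal zeros, one has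
    [D(s ++ s) = 4 D(s)], so [Delta (2X) = 4 Delta X + 2|X| {0}].  Summing over
    the blocks of the partition gives [4 lambda] copies of every nonzero
    element and [2|G| = 4 lambda] copies of [0]. *)
From HB Require Import structures.
From mathcomp Require Import all_boot all_fingroup.
From mathcomp Require Import zify.
Set Implicit Arguments. Unset Strict Implicit. Unset Printing Implicit Defensive.

Lemma count_diag_allpairs (l : seq nat) : uniq l ->
  count [pred ij : nat * nat | ij.1 == ij.2] [seq (i, j) | i <- l, j <- l] = size l.
Proof.
move=> l_uniq; rewrite count_flatten -map_comp sumnE big_map -sum1_size.
apply: eq_big_seq => i il; have := count_uniq_mem i l_uniq; rewrite il /= => <-.
by rewrite /= count_map; apply: eq_count => j /=; rewrite eq_sym.
Qed.

Section Differences.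
Variable gT : finGroupType.
Implicit Types (s : seq gT) (g : gT).

Definition all_diffs s : seq gT := [seq (x * y^-1)%g | x <- s, y <- s].

Lemma count_all_diffs_twice s g :
  count_mem g (all_diffs (twice s)) = 4 * count_mem g (all_diffs s).
Proof.
rewrite /all_diffs /twice allpairs_cat count_cat.
rewrite !(seq.permP (introT permPl (perm_allpairs_catr _ _ _ _))) !count_cat.
by rewrite !addnn -!mul2n mulnA.
Qed.

Lemma count_all_diffs s g :
  count_mem g (all_diffs s) = count_mem g (DeltaSeq s) + (g == 1%g) * size s.
Proof.
set P := [seq (i, j) | i <- iota 0 (size s), j <- iota 0 (size s)].
set h := fun ij : nat * nat => (nth 1 s ij.1 * (nth 1 s ij.2)^-1)%g.
have -> : all_diffs s = map h P.
  by rewrite map_allpairs /all_diffs -{1 2}(mkseq_nth 1%g s) allpairs_mapl allpairs_mapr.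
pose off := [pred ij : nat * nat | (ij.1 != ij.2) && (h ij == g)].
pose diag := [pred ij : nat * nat | (ij.1 == ij.2) && (g == 1%g)].
have diag_count : count diag P = (g == 1%g) * size s.
  rewrite /diag; case: (g == 1%g).
    rewrite mul1n -[RHS](size_iota 0) -(count_diag_allpairs (iota_uniq 0 _)).
    by apply: eq_count => ij /=; rewrite andbT.
  by rewrite mul0n -(count_pred0 P); apply: eq_count => ij /=; rewrite andbF.
have split_diag := count_predUI off diag P.
rewrite (@eq_count _ (predI off diag) pred0) in split_diag; last first.
  by move=> [i j] /=; case: (i == j); rewrite ?andbF.
rewrite (@eq_count _ (predU off diag) (preim h (pred1 g))) in split_diag; last first.
  move=> [i j] /=; case: eqP => [->|_] /=; last by rewrite orbF.
  by have -> : h (j, j) = 1%g by exact: mulgV.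
rewrite count_map -diag_count /DeltaSeq count_map count_filter count_pred0 addn0 in split_diag *.
by rewrite split_diag; congr (_ + _); apply: eq_count => -[i j]; rewrite /= andbC.
Qed.

Lemma count_DeltaSeq_twice s g :
  count_mem g (DeltaSeq (twice s)) = 4 * count_mem g (DeltaSeq s) + (g == 1%g) * (2 * size s).
Proof.
have := count_all_diffs (twice s) g; have := count_all_diffs s g.
by rewrite count_all_diffs_twice /twice size_cat; lia.
Qed.

Lemma count_DeltaFam (Y : seq (seq gT)) g :
  count_mem g (DeltaFam Y) = \sum_(X <- Y) count_mem g (DeltaSeq X).
Proof. by rewrite count_flatten sumnE !big_map. Qed.

Lemma size_twice_enum (X : {set gT}) : size (twice (enum X)) = 2 * #|X|.
Proof. by rewrite size_cat -cardE addnn mul2n. Qed.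

Lemma sum_card_partition (F : seq {set gT}) :
  (forall x : gT, count (fun X : {set gT} => x \in X) F = 1) ->
  \sum_(X <- F) #|X| = #|gT|.
Proof.
move=> cover.
rewrite (eq_bigr (fun X : {set gT} => \sum_(x : gT) (x \in X : nat))); last first.
  by move=> X _; rewrite -sum1_card big_mkcond.
rewrite exchange_big -sum1_card; apply: eq_bigr => x _.
rewrite -(cover x) -sum1_count [RHS]big_mkcond.
by apply: eq_bigr => X _; case: (x \in X).
Qed.

End Differences.

Theorem proposition2p2 (gT : finGroupType) (F : seq {set gT}) (K : seq nat) (lambda : nat) :
  is_Hadamard_PDF F K lambda ->
  is_SDF [seq twice (enum X) | X : {set gT} <- F] (dbl K) (4 * lambda).
Proof.
move=> [[cover [sizes Delta]] card_gT]; split.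
  by rewrite -map_comp (eq_map (@size_twice_enum gT)) map_comp perm_map.
move=> g; rewrite count_DeltaFam big_map.
under eq_bigr do rewrite count_DeltaSeq_twice -cardE.
rewrite big_split -!big_distrr /= sum_card_partition // card_gT.
have := Delta g; rewrite count_DeltaFam big_map => ->.
by case: eqP => _; lia.
Qed.
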